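(* Let $\epsilon_1,\dots,\epsilon_n$ ($n\ge3$) be directed edges of $\vec\Gamma$ forming a loop, i.e. $t(\epsilon_k)=s(\epsilon_{k+1})$ for $1\le k<n$ and $t(\epsilon_n)=s(\epsilon_1)$. Then $$\mathrm{Tr}(X_{\epsilon_1}\cdots X_{\epsilon_n})=\frac{1}{\sqrt{\mu(s(\epsilon_n))\mu(t(\epsilon_n))}}\sum_{\substack{1\le j\le n-1,\ \epsilon_j=\epsilon_n^{op}\\ j\notin\{1,n-1\}}}\mathrm{Tr}(X_{\epsilon_1}\cdots X_{\epsilon_{j-1}})\,\mathrm{Tr}(X_{\epsilon_{j+1}}\cdots X_{\epsilon_{n-1}})$$ $$+\ \delta_{\epsilon_{n-1},\epsilon_n^{op}}\sqrt{\tfrac{\mu(s(\epsilon_n))}{\mu(t(\epsilon_n))}}\,\mathrm{Tr}(X_{\epsilon_1}\cdots X_{\epsilon_{n-2}})+\delta_{\epsilon_1,\epsilon_n^{op}}\sqrt{\tfrac{\mu(t(\epsilon_n))}{\mu(s(\epsilon_n))}}\,\mathrm{Tr}(X_{\epsilon_2}\cdots X_{\epsilon_{n-1}}).$$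
   Context: $\Gamma$ is a countable, connected, undirected, locally finite graph (loops and multiple edges allowed) with vertex set $V$, edge set $E$, weighting $\mu:V\to(0,\infty)$. The directed version $\vec\Gamma$ has vertices $V$; each edge $e$ with distinct endpoints $\alpha\neq\beta$ yields directed edges $\epsilon,\epsilon^{op}$ with $s(\epsilon)=t(\epsilon^{op})=\alpha$, $t(\epsilon)=s(\epsilon^{op})=\beta$; each loop $e$ at $\gamma$ yields one directed loop $\epsilon=\epsilon^{op}$. Let $\mathcal C=C_0(V)$ with $p_\alpha$ the indicator of $\alpha$; $\mathcal X$ the Hilbert $\mathcal C$-$\mathcal C$ bimodule spanned by directed edges with $p_\alpha\epsilon=\delta_{s(\epsilon),\alpha}\epsilon$, $\epsilon p_\alpha=\delta_{t(\epsilon),\alpha}\epsilon$, $\langle\epsilon'|\epsilon\rangle=\delta_{\epsilon,\epsilon'}p_{t(\epsilon)}$; $\mathcal F(\mathcal X)=\mathcal C\oplus\bigoplus_{n\ge1}\mathcal X^{\otimes_{\mathcal C}n}$ with creation operators $\ell(\xi)$. For a loop $e$: $X_e=\ell(\epsilon)+\ell(\epsilon)^*$; for $e$ with endpoints $\alpha\ne\beta$: $a_\epsilon=(\mu(\alpha)/\mu(\beta))^{1/4}$, $X_e=a_\epsilon\ell(\epsilon)+a_\epsilon^{-1}\ell(\epsilon^{op})^*+a_\epsilon^{-1}\ell(\epsilon^{op})+a_\epsilon\ell(\epsilon)^*$. For a directed edge $\epsilon$ arising from $e$, $X_\epsilon=p_{s(\epsilon)}X_ep_{t(\epsilon)}$.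 $\mathrm{Tr}=\mathrm{tr}\circ E$, where $E(x)=PxP$ with $P$ the projection of $\mathcal F(\mathcal X)$ onto $\mathcal C$ and $\mathrm{tr}(p_v)=\mu(v)$. Empty products $X_{\epsilon_i}\cdots X_{\epsilon_j}$ (if any arise) are interpreted as the appropriate vertex projection. *)

From HB Require Import structures.
From mathcomp Require Import all_boot all_order all_algebra.
From mathcomp Require Import reals.
Set Implicit Arguments. Unset Strict Implicit. Unset Printing Implicit Defensive.
Import Order.TTheory GRing.Theory Num.Theory.
Local Open Scope ring_scope.

(* Undirected edges = orbits of op; a loop e yields a single directed loop
   with op d = d, a non-loop yields two distinct directed edges d, op d. *)
Definition directed_graph (V D : eqType) (s t : D -> V) (op : D -> D) : Prop :=
  [/\ forall d, op (op d) = d,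
      forall d, s (op d) = t d &
      forall d, (op d == d) = (s d == t d)].

Definition locally_finite (V D : eqType) (s : D -> V) : Prop :=
  forall v, exists l : seq D, forall d, s d = v -> d \in l.

Fixpoint dpath (V D : eqType) (s t : D -> V) (u : V) (w : seq D) (v : V) : bool :=
  match w with
  | [::] => u == v
  | d :: w' => (s d == u) && dpath s t (t d) w' v
  end.

Definition graph_connected (V D : eqType) (s t : D -> V) : Prop :=
  forall u v, exists w : seq D, dpath s t u w v.

Section Fock.
Variables (R : realType) (V D : eqType) (s t : D -> V) (op : D -> D) (mu : V -> R).

(* Basis of the algebraic Fock space F(X):
   (v, [::])          = p_v  in C = C_0(V)
   (s e1, [:: e1;..;en]) = e1 (x) ... (x) en  (composable, t ei = s e(i+1)). *)
Definition basis := (V * seq D)%type.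
Definition vec := seq (R * basis).
Definition oper := basis -> vec.

Definition vapply (f : oper) (x : vec) : vec :=
  flatten [seq [seq (cb.1 * p.1, p.2) | p <- f cb.2] | cb <- x].

Definition coef (b : basis) (x : vec) : R :=
  \sum_(p <- x) (if p.2 == b then p.1 else 0).

Definition oid : oper := fun b => [:: (1, b)].
Definition oadd (f g : oper) : oper := fun b => f b ++ g b.
Definition oscale (a : R) (f : oper) : oper :=
  fun b => [seq (a * p.1, p.2) | p <- f b].
Definition ocomp (f g : oper) : oper := fun b => vapply f (g b).

Definition proj (a : V) : oper :=
  fun b => if b.1 == a then [:: (1, b)] else [::].

(* creation operator l(e) : xi |-> e (x) xi   (e (x) p_v = delta_{t e, v} e) *)
Definition create (e : D) : oper :=
  fun b => if t e == b.1 then [:: (1, (s e, e :: b.2))] else [::].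

Definition annih (e : D) : oper :=
  fun b => match b.2 with
           | e' :: w => if e == e' then [:: (1, (t e, w))] else [::]
           | [::] => [::]
           end.

Definition acoef (e : D) : R := Num.sqrt (Num.sqrt (mu (s e) / mu (t e))).

(* X_e, written using the directed edge e arising from it *)
Definition Xedge (e : D) : oper :=
  if op e == e then oadd (create e) (annih e)
  else oadd (oadd (oadd (oscale (acoef e) (create e))
                        (oscale (acoef e)^-1 (annih (op e))))
                  (oscale (acoef e)^-1 (create (op e))))
            (oscale (acoef e) (annih e)).

Definition Xdir (e : D) : oper := ocomp (proj (s e)) (ocomp (Xedge e) (proj (t e))).

Definition word_op (w : seq D) : oper := foldr (fun e f => ocomp (Xdir e) f) oid w.

(* E(x) = P x P, as an element of C_0(V): v |-> coefficient of p_v in P x p_v *)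
Definition Ecoef (w : seq D) (v : V) : R := coef (v, [::]) (word_op w (v, [::])).

(* Tr = tr o E with tr(p_v) = mu v.  For a word w, E(X_{w1}...X_{wn}) is
   supported in {s w1}, so the sum over V reduces to the (finite) set of
   source vertices of w. *)
Definition Tr (w : seq D) : R := \sum_(v <- undup (map s w)) mu v * Ecoef w v.

End Fock.

(* the word eps_i, ..., eps_j (indices i..j, empty if j < i) *)
Definition subword (D : Type) (eps : nat -> D) (i j : nat) : seq D :=
  [seq eps k | k <- iota i (j.+1 - i)].

From HB Require Import structures.
From mathcomp Require Import all_boot all_order all_algebra.
From mathcomp Require Import reals ring.
Set Implicit Arguments. Unset Strict Implicit. Unset Printing Implicit Defensive.
Import Order.TTheory GRing.Theory Num.Theory.
Local Open Scope ring_scope.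

(* [X_{eps_n}] sends the vacuum [p_{t(eps_n)}] to a multiple of the one-letter
   tensor [eps_n], so the trace is the vacuum coefficient of
   [X_{eps_1} ... X_{eps_(n-1)}] applied to [eps_n].  Each [X_eps] acts on a
   tensor [xi (x) eps_n] as on [xi], except that on a vacuum [xi] its
   annihilation part may remove the last factor [eps_n].  Returning to the
   vacuum forces this to happen exactly once, at some [j] with
   [eps_j = eps_n^op]; splitting there factors the vacuum coefficient into those
   of [X_{eps_1} ... X_{eps_(j-1)}] and [X_{eps_(j+1)} ... X_{eps_(n-1)}], and
   the weights [a_eps] combine into the square roots of the statement.  The
   boundary terms [j = 1] and [j = n - 1] are those where one word is empty. *)

Section LinearCombinations.
Variables (R : realType) (V D : eqType).
Local Notation basis := (basis V D).
Local Notation vec := (vec R V D).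
Local Notation oper := (oper R V D).

(* A [vec] is a formal sum with repetitions, so vectors are compared through
   their coefficients. *)
Definition vequiv (x y : vec) := forall b, coef b x = coef b y.

Definition vscale (c : R) (y : vec) : vec := [seq (c * p.1, p.2) | p <- y].

Lemma coef_nil b : coef b ([::] : vec) = 0.
Proof. by rewrite /coef big_nil. Qed.

Lemma coef_cons b p (x : vec) :
  coef b (p :: x) = (if p.2 == b then p.1 else 0) + coef b x.
Proof. by rewrite /coef big_cons. Qed.

Lemma coef_cat b (x y : vec) : coef b (x ++ y) = coef b x + coef b y.
Proof. by rewrite /coef big_cat. Qed.

Lemma coef_seq1 b c (b' : basis) : coef b ([:: (c, b')] : vec) = if b' == b then c else 0.
Proof. by rewrite coef_cons coef_nil addr0. Qed.

Lemma coef_vscale b c (y : vec) : coef b (vscale c y) = c * coef b y.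
Proof.
rewrite /coef /vscale big_map mulr_sumr; apply: eq_bigr => p _ /=.
by case: ifP; rewrite ?mulr0.
Qed.

Lemma coef_flatten_vscale b (I : Type) (r : seq I) (c : I -> R) (y : I -> vec) :
  coef b (flatten [seq vscale (c i) (y i) | i <- r]) = \sum_(i <- r) c i * coef b (y i).
Proof.
elim: r => [|i r IH]; first by rewrite big_nil coef_nil.
by rewrite /= coef_cat IH big_cons coef_vscale.
Qed.

Lemma big_coef_mulr (y : vec) (b : basis) (K : R) :
  \sum_(p <- y) p.1 * (if p.2 == b then K else 0) = coef b y * K.
Proof.
rewrite /coef mulr_suml; apply: eq_bigr => p _.
by case: ifP; rewrite ?mulr0 ?mul0r.
Qed.

Lemma coef_vapply b (f : oper) (x : vec) :
  coef b (vapply f x) = \sum_(p <- x) p.1 * coef b (f p.2).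
Proof.
elim: x => [|q x IH]; first by rewrite /vapply /= coef_nil big_nil.
by rewrite big_cons -IH /vapply /= coef_cat -(coef_vscale b q.1 (f q.2)).
Qed.

Lemma big_vec_coef (g : basis -> R) (x : vec) (S : seq basis) :
  uniq S -> {subset map snd x <= S} ->
  \sum_(p <- x) p.1 * g p.2 = \sum_(b <- S) coef b x * g b.
Proof.
move=> uS; elim: x => [|q x IH] xS.
  by rewrite big_nil big1 // => b _; rewrite coef_nil mul0r.
rewrite big_cons IH; last by move=> y hy; apply: xS; rewrite /= in_cons hy orbT.
under [RHS]eq_bigr => b _ do rewrite coef_cons mulrDl.
rewrite big_split /=; congr (_ + _).
have qS : q.2 \in S by apply: xS; rewrite /= mem_head.
rewrite (bigD1_seq q.2) //= eqxx big1 ?addr0 // => b hb.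
by rewrite eq_sym (negbTE hb) mul0r.
Qed.

Lemma big_vequiv (g : basis -> R) (x y : vec) : vequiv x y ->
  \sum_(p <- x) p.1 * g p.2 = \sum_(p <- y) p.1 * g p.2.
Proof.
move=> xy; set S := undup (map snd (x ++ y)).
have uS : uniq S by apply: undup_uniq.
rewrite (big_vec_coef g uS (x := x)); last first.
  by move=> z hz; rewrite mem_undup map_cat mem_cat hz.
rewrite (big_vec_coef g uS (x := y)); last first.
  by move=> z hz; rewrite mem_undup map_cat mem_cat hz orbT.
by apply: eq_bigr => b _; rewrite xy.
Qed.

Lemma vequiv_vapply (f : oper) (x y : vec) :
  vequiv x y -> vequiv (vapply f x) (vapply f y).
Proof. by move=> xy b; rewrite !coef_vapply (big_vequiv (fun b' => coef b (f b')) xy). Qed.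

Lemma vapply_cat (f : oper) (x y : vec) : vapply f (x ++ y) = vapply f x ++ vapply f y.
Proof. by rewrite /vapply map_cat flatten_cat. Qed.

Lemma coef_vapply_vscale b (f : oper) c (x : vec) :
  coef b (vapply f (vscale c x)) = c * coef b (vapply f x).
Proof.
rewrite !coef_vapply /vscale big_map mulr_sumr; apply: eq_bigr => p _ /=.
by rewrite mulrA.
Qed.

Lemma vapply_ocomp (f g : oper) (x : vec) :
  vequiv (vapply f (vapply g x)) (vapply (ocomp f g) x).
Proof.
move=> b; elim: x => [|q x IH] //=.
rewrite vapply_cat coef_cat IH [in RHS]/vapply /= coef_cat; congr (_ + _).
rewrite -/(vapply f _) -/(vscale q.1 (g q.2)) coef_vapply_vscale.
by rewrite -/(vscale q.1 (vapply f (g q.2))) coef_vscale.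
Qed.

Lemma vapply_oid (x : vec) : vequiv (vapply (@oid R V D) x) x.
Proof.
move=> b; rewrite coef_vapply /coef; apply: eq_bigr => p _.
by rewrite /oid big_seq1; case: ifP; rewrite ?mulr1 ?mulr0.
Qed.

Lemma vapply_seq1 (f : oper) c (b : basis) : vequiv (vapply f [:: (c, b)]) (vscale c (f b)).
Proof. by move=> b'; rewrite coef_vapply big_seq1 coef_vscale. Qed.

Lemma coef_vapply_flatten b (f : oper) (I : Type) (r : seq I) (c : I -> R) (y : I -> vec) :
  coef b (vapply f (flatten [seq vscale (c i) (y i) | i <- r])) =
  \sum_(i <- r) c i * coef b (vapply f (y i)).
Proof.
elim: r => [|i r IH]; first by rewrite big_nil /vapply /= coef_nil.
by rewrite /= vapply_cat coef_cat IH big_cons coef_vapply_vscale.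
Qed.

Lemma coef_vapply_proj b a (x : vec) :
  coef b (vapply (proj R a) x) = if b.1 == a then coef b x else 0.
Proof.
rewrite coef_vapply /coef; case: eqP => [<-|ba].
  apply: eq_bigr => p _; rewrite /proj; case: eqP => [pb|pb].
    by rewrite big_seq1; case: ifP; rewrite ?mulr1 ?mulr0.
  by rewrite big_nil mulr0; case: eqP => // pb'; case: pb; rewrite pb'.
rewrite big1 // => p _; rewrite /proj; case: eqP => [pa|]; last by rewrite big_nil mulr0.
rewrite big_seq1; case: eqP => [pb|]; last by rewrite mulr0.
by case: ba; rewrite -pb.
Qed.

End LinearCombinations.

Section Subword.
Variables (D : Type) (eps : nat -> D).

Lemma subword1E m : subword eps 1 m = map eps (iota 1 m).
Proof. by rewrite /subword subn1. Qed.

Lemma subword_cons i j : (i <= j)%N -> subword eps i j = eps i :: subword eps i.+1 j.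
Proof. by move=> ij; rewrite /subword subSS (subSn ij). Qed.

Lemma subword_nil i j : (j < i)%N -> subword eps i j = [::].
Proof. by move=> ji; rewrite /subword (eqP (_ : j.+1 - i == 0)%N) // subn_eq0. Qed.

Lemma subword1_rcons m : subword eps 1 m.+1 = rcons (subword eps 1 m) (eps m.+1).
Proof. by rewrite !subword1E -[m.+1]addn1 iotaD map_cat cats1 add1n addn1. Qed.

Lemma size_subword1 m : size (subword eps 1 m) = m.
Proof. by rewrite subword1E size_map size_iota. Qed.

Lemma take_subword1 m i : (i <= m)%N -> take i (subword eps 1 m) = subword eps 1 i.
Proof. by move=> im; rewrite !subword1E -map_take take_iota (minn_idPl im). Qed.

Lemma drop_subword1 m i : (i < m)%N -> drop i.+1 (subword eps 1 m) = subword eps i.+2 m.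
Proof. by move=> im; rewrite subword1E -map_drop drop_iota /subword subSS add1n. Qed.

Lemma nth_subword1 m i d : (i < m)%N -> nth d (subword eps 1 m) i = eps i.+1.
Proof. by move=> im; rewrite subword1E (nth_map 0%N) ?size_iota // nth_iota // add1n. Qed.

End Subword.

Section SqrtRatios.
Variables (R : realType) (x y : R).
Hypotheses (x_gt0 : 0 < x) (y_gt0 : 0 < y).

Lemma sqrtr_div_divl : Num.sqrt (x / y) / x = (Num.sqrt (x * y))^-1.
Proof.
rewrite !sqrtrM ?ltW // sqrtrV ?ltW //.
have sx : Num.sqrt x != 0 by rewrite gt_eqF // sqrtr_gt0.
have sy : Num.sqrt y != 0 by rewrite gt_eqF // sqrtr_gt0.
rewrite -{2}(sqr_sqrtr (ltW x_gt0)); field; exact/andP.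
Qed.

Lemma sqrtr_div_mulr : Num.sqrt (x / y) * y / x = Num.sqrt (y / x).
Proof.
rewrite !sqrtrM ?ltW // !sqrtrV ?ltW //.
have sx : Num.sqrt x != 0 by rewrite gt_eqF // sqrtr_gt0.
have sy : Num.sqrt y != 0 by rewrite gt_eqF // sqrtr_gt0.
rewrite -{2}(sqr_sqrtr (ltW x_gt0)) -{2}(sqr_sqrtr (ltW y_gt0)); field; exact/andP.
Qed.

End SqrtRatios.

Section FockSpace.
Variables (R : realType) (V D : eqType) (s t : D -> V) (op : D -> D) (mu : V -> R).
Hypothesis hG : directed_graph s t op.
Local Notation basis := (basis V D).
Local Notation vec := (vec R V D).
Local Notation oper := (oper R V D).
Local Notation word_op := (word_op s t op mu).
Local Notation Xdir := (Xdir s t op mu).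
Local Notation Xedge := (Xedge s t op mu).
Local Notation Ecoef := (Ecoef s t op mu).
Local Notation Tr := (Tr s t op mu).

Lemma opK : involutive op. Proof. by case: hG. Qed.
Lemma s_op d : s (op d) = t d. Proof. by case: hG. Qed.
Lemma t_op d : t (op d) = s d. Proof. by rewrite -{2}(opK d) s_op. Qed.
Lemma op_fixedE d : (op d == d) = (s d == t d). Proof. by case: hG. Qed.

Lemma coef_Xdir g x (b : basis) : coef g (Xdir x b) =
  if (b.1 == t x) && (g.1 == s x) then coef g (Xedge x b) else 0.
Proof.
rewrite /Xdir /ocomp coef_vapply_proj /proj; case: (b.1 == t x) => /=.
  by case: ifP => // _; rewrite vapply_seq1 coef_vscale mul1r.
by case: ifP => // _; rewrite /vapply /= coef_nil.
Qed.

Lemma Ecoef_nil v : Ecoef [::] v = 1.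
Proof. by rewrite /Ecoef /= /oid coef_seq1 eqxx. Qed.

Lemma Ecoef_cons_neq x w v : v != s x -> Ecoef (x :: w) v = 0.
Proof.
move=> vx; rewrite /Ecoef /= /ocomp coef_vapply big1 // => p _.
by rewrite coef_Xdir /= (negbTE vx) andbF mulr0.
Qed.

Lemma Tr_cons x w : Tr (x :: w) = mu (s x) * Ecoef (x :: w) (s x).
Proof.
rewrite /Tr (bigD1_seq (s x)) ?undup_uniq ?mem_undup ?mem_head //=.
by rewrite big1 ?addr0 // => v vx; rewrite Ecoef_cons_neq // mulr0.
Qed.

Lemma Tr_subword (eps : nat -> D) i j : (i <= j)%N ->
  Tr (subword eps i j) = mu (s (eps i)) * Ecoef (subword eps i j) (s (eps i)).
Proof. by move=> ij; rewrite (subword_cons eps ij) Tr_cons. Qed.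

Lemma word_op_rcons w y b : vequiv (word_op (rcons w y) b) (vapply (word_op w) (Xdir y b)).
Proof.
elim: w b => [|x w IH] b g.
  by rewrite /= vapply_seq1 coef_vscale mul1r vapply_oid.
rewrite /= /ocomp (vequiv_vapply _ (IH b)); exact: vapply_ocomp.
Qed.

Definition create_weight y : R := if op y == y then 1 else acoef s t mu y.
Definition annih_weight y : R := if op y == y then 1 else (acoef s t mu y)^-1.

Lemma create_annih_weight (mu_gt0 : forall v, 0 < mu v) y :
  create_weight y * annih_weight (op y) = Num.sqrt (mu (s y) / mu (t y)).
Proof.
rewrite /create_weight /annih_weight opK (eq_sym y); case: ifP => yloop.
  have -> : s y = t y by apply/eqP; rewrite -op_fixedE.
  by rewrite mulr1 divff ?sqrtr1 // gt_eqF.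
rewrite /acoef s_op t_op -[mu (t y) / mu (s y)]invf_div.
have ge0 : 0 <= mu (s y) / mu (t y) by rewrite divr_ge0 // ltW.
rewrite (sqrtrV ge0) (sqrtrV (sqrtr_ge0 _)) invrK -expr2 sqr_sqrtr //.
exact: sqrtr_ge0.
Qed.

Lemma Xdir_vacuum y : vequiv (Xdir y (t y, [::])) [:: (create_weight y, (s y, [:: y]))].
Proof.
move=> g; rewrite coef_Xdir eqxx /= coef_seq1 /create_weight /Xedge.
case yloop: (op y == y); rewrite /oadd /oscale /create /annih /= eqxx.
  rewrite cats0 coef_seq1; case: (eqVneq g (s y, [:: y])) => [->|gy] /=.
    by rewrite !eqxx.
  by rewrite if_same.
rewrite t_op -op_fixedE yloop /= coef_seq1 mulr1.
case: (eqVneq g (s y, [:: y])) => [->|gy] /=; first by rewrite !eqxx.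
by rewrite if_same.
Qed.

Section AppendEdge.
Variable e : D.

Definition rcons_basis (b : basis) : basis := (b.1, rcons b.2 e).
Definition rcons_vec (y : vec) : vec := [seq (p.1, rcons_basis p.2) | p <- y].

(* [f] acts on [xi (x) e] as on [xi], except for the correction [E xi] produced
   when [f] reaches the last factor [e]. *)
Definition rcons_commutes (f : oper) (E : basis -> vec) :=
  forall b, vequiv (f (rcons_basis b)) (rcons_vec (f b) ++ E b).

Lemma rcons_vec_cat x y : rcons_vec (x ++ y) = rcons_vec x ++ rcons_vec y.
Proof. exact: map_cat. Qed.

Lemma rcons_vec_vscale c y : rcons_vec (vscale c y) = vscale c (rcons_vec y).
Proof. by rewrite /rcons_vec /vscale -!map_comp. Qed.

Lemma rcons_vec_vapply (f : oper) y :
  rcons_vec (vapply f y) = vapply (fun b => rcons_vec (f b)) y.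
Proof.
elim: y => [|p y IH] //.
by rewrite /= rcons_vec_cat IH -/(vscale p.1 (f p.2)) rcons_vec_vscale.
Qed.

Lemma rcons_commutes_ext f E E' :
  rcons_commutes f E -> (forall b, vequiv (E b) (E' b)) -> rcons_commutes f E'.
Proof. by move=> fE EE' b g; rewrite fE !coef_cat EE'. Qed.

Lemma rcons_commutes_create y : rcons_commutes (create R s t y) (fun _ => [::]).
Proof. by move=> [v u] g; rewrite cats0 /create /=; case: ifP. Qed.

Lemma rcons_commutes_proj a : rcons_commutes (proj R a) (fun _ => [::]).
Proof. by move=> [v u] g; rewrite cats0 /proj /=; case: ifP. Qed.

Definition annih_defect y (b : basis) : vec :=
  if (b.2 == [::]) && (y == e) then [:: (1, (t y, [::]))] else [::].

Lemma rcons_commutes_annih y : rcons_commutes (annih R t y) (annih_defect y).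
Proof.
move=> [v [|h u]] g; rewrite /annih /annih_defect /=; first by case: ifP.
by case: ifP; rewrite cats0.
Qed.

Lemma rcons_commutes_oadd f g Ef Eg : rcons_commutes f Ef -> rcons_commutes g Eg ->
  rcons_commutes (oadd f g) (fun b => Ef b ++ Eg b).
Proof.
move=> fE gE b x; rewrite /oadd coef_cat fE gE rcons_vec_cat !coef_cat.
by rewrite !addrA; congr (_ + _); rewrite -!addrA; congr (_ + _); rewrite addrC.
Qed.

Lemma rcons_commutes_oscale c f Ef : rcons_commutes f Ef ->
  rcons_commutes (oscale c f) (fun b => vscale c (Ef b)).
Proof.
move=> fE b x; rewrite /oscale -/(vscale c _) coef_vscale fE -/(vscale c (f b)).
by rewrite rcons_vec_vscale !coef_cat !coef_vscale mulrDr.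
Qed.

Lemma vapply_rcons_vec f Ef y : rcons_commutes f Ef ->
  vequiv (vapply f (rcons_vec y))
         (rcons_vec (vapply f y) ++ flatten [seq vscale p.1 (Ef p.2) | p <- y]).
Proof.
move=> fE g; rewrite coef_cat coef_flatten_vscale rcons_vec_vapply !coef_vapply.
rewrite /rcons_vec big_map -big_split /=; apply: eq_bigr => p _.
by rewrite fE coef_cat mulrDr.
Qed.

Lemma rcons_commutes_ocomp f g Ef Eg : rcons_commutes f Ef -> rcons_commutes g Eg ->
  rcons_commutes (ocomp f g)
    (fun b => flatten [seq vscale p.1 (Ef p.2) | p <- g b] ++ vapply f (Eg b)).
Proof.
move=> fE gE b x; rewrite /ocomp (vequiv_vapply f (gE b)) vapply_cat coef_cat.
by rewrite (vapply_rcons_vec _ fE) !coef_cat addrA.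
Qed.

Definition Xedge_defect x b : vec :=
  if op x == x then annih_defect x b
  else vscale (acoef s t mu x)^-1 (annih_defect (op x) b)
       ++ vscale (acoef s t mu x) (annih_defect x b).

Lemma rcons_commutes_Xedge x : rcons_commutes (Xedge x) (Xedge_defect x).
Proof.
rewrite /Xedge /Xedge_defect; case: ifP => _.
  exact: (rcons_commutes_oadd (rcons_commutes_create _) (rcons_commutes_annih _)).
apply: rcons_commutes_ext.
  exact: (rcons_commutes_oadd (rcons_commutes_oadd (rcons_commutes_oadd
    (rcons_commutes_oscale _ (rcons_commutes_create _))
    (rcons_commutes_oscale _ (rcons_commutes_annih _)))
    (rcons_commutes_oscale _ (rcons_commutes_create _)))
    (rcons_commutes_oscale _ (rcons_commutes_annih _))).
by move=> b g /=; rewrite !coef_cat coef_nil addr0.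
Qed.

Lemma coef_annih_defect g y b : coef g (annih_defect y b) =
  if [&& b.2 == [::], y == e & (t y, [::]) == g] then 1 else 0.
Proof.
by rewrite /annih_defect; case: (b.2 == [::]); case: (y == e);
  rewrite /= ?coef_seq1 ?coef_nil.
Qed.

(* Seen from the source [s x], only the annihilation of [e] by [l(op x)^*]
   survives: for a non-loop [x], [e = x] would force [t x = s x]. *)
Lemma coef_Xedge_defect_at_source g x b : g.1 = s x ->
  coef g (Xedge_defect x b) =
  if [&& b.2 == [::], x == op e & g == (s x, [::])] then annih_weight x else 0.
Proof.
case: g => v u /= ->; rewrite /Xedge_defect /annih_weight.
rewrite -(can2_eq opK opK); case: ifP => xloop.
  rewrite coef_annih_defect (eqP xloop).
  have -> : t x = s x by apply/esym/eqP; rewrite -op_fixedE.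
  by rewrite [(s x, [::]) == _]eq_sym.
rewrite coef_cat !coef_vscale !coef_annih_defect t_op [(s x, [::]) == _]eq_sym.
have -> : (t x, [::]) == (s x, u) = false.
  by apply/negbTE; rewrite xpair_eqE negb_and eq_sym -op_fixedE xloop.
by rewrite !andbF mulr0 addr0; case: (_ && _); rewrite ?mulr1 ?mulr0.
Qed.

Definition Xdir_defect x (b : basis) : vec :=
  if (b == (s e, [::])) && (x == op e) then [:: (annih_weight x, (t e, [::]))] else [::].

Lemma rcons_commutes_Xdir x : rcons_commutes (Xdir x) (Xdir_defect x).
Proof.
apply: rcons_commutes_ext => [|b g].
  exact: (rcons_commutes_ocomp (rcons_commutes_proj _)
           (rcons_commutes_ocomp (rcons_commutes_Xedge x) (rcons_commutes_proj _))).
rewrite coef_cat coef_flatten_vscale big1 => [|p _]; last by rewrite coef_nil mulr0.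
rewrite add0r coef_vapply_proj coef_cat coef_flatten_vscale /vapply /= coef_nil addr0.
rewrite /Xdir_defect /proj; case: b => v u /=.
case: (eqVneq g.1 (s x)) => [gs|gs]; last first.
  case: ifP => [/andP [_ /eqP xe]|_]; rewrite ?coef_nil //.
  by rewrite coef_seq1; case: eqP => // tg; move: gs; rewrite -tg xe s_op eqxx.
case: (eqVneq v (t x)) => [->|vt]; last first.
  rewrite big_nil; case: ifP => [/andP [/eqP [vs _] /eqP xe]|_]; rewrite ?coef_nil //.
  by move: vt; rewrite vs xe t_op eqxx.
rewrite big_seq1 mul1r coef_Xedge_defect_at_source //=.
case: (eqVneq x (op e)) => [xe|_]; last by rewrite !andbF coef_nil.
rewrite xe s_op t_op xpair_eqE eqxx !andbT.
by case: u => [|h u] /=; rewrite ?coef_seq1 ?coef_nil // eq_sym.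
Qed.

(* Splitting at position [i] (counted from 0): the letters after [i] carry [b]
   to the vacuum at [s e], then letter [i] annihilates [e]. *)
Definition defect_weight (w : seq D) b i :=
  (if nth e w i == op e then annih_weight (op e) else 0)
  * coef (s e, [::]) (word_op (drop i.+1 w) b).

Definition word_defect (w : seq D) b : vec :=
  flatten [seq vscale (defect_weight w b i) (word_op (take i w) (t e, [::]))
          | i <- iota 0 (size w)].

Lemma word_defect_cons x w b : word_defect (x :: w) b =
  vscale (defect_weight (x :: w) b 0) (word_op [::] (t e, [::])) ++
  flatten [seq vscale (defect_weight w b i) (word_op (x :: take i w) (t e, [::]))
          | i <- iota 0 (size w)].
Proof. by rewrite /word_defect /= -(addn0 1%N) iotaDl -map_comp. Qed.

Lemma rcons_commutes_word_op w : rcons_commutes (word_op w) (word_defect w).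
Proof.
elim: w => [|x w IH] b g; first by rewrite /word_defect /=.
rewrite /= /ocomp word_defect_cons (vequiv_vapply _ (IH b)) vapply_cat coef_cat.
rewrite (vapply_rcons_vec _ (rcons_commutes_Xdir x)) !coef_cat -addrA; congr (_ + _).
rewrite coef_vscale (coef_flatten_vscale g (iota 0 (size w))) coef_flatten_vscale.
rewrite coef_vapply_flatten; congr (_ + _).
rewrite /defect_weight /= /oid /Xdir_defect drop0.
case: (eqVneq x (op e)) => [->|_]; last first.
  by rewrite !mul0r big1 // => p _; rewrite andbF coef_nil mulr0.
have vacuum_to_vacuum (p : R * basis) :
    p.1 * coef g (if (p.2 == (s e, [::])) && true
                  then [:: (annih_weight (op e), (t e, [::]))] else [::]) =
    p.1 * (if p.2 == (s e, [::])
           then (if (t e, [::]) == g then annih_weight (op e) else 0) else 0).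
  by rewrite andbT; case: ifP; rewrite ?coef_seq1 ?coef_nil.
rewrite (eq_bigr _ (fun p _ => vacuum_to_vacuum p)).
by rewrite big_coef_mulr coef_seq1; case: ifP; rewrite ?mulr1 ?mulr0 // mulrC.
Qed.

Lemma Ecoef_rcons w : Ecoef (rcons w e) (t e) =
  create_weight e * \sum_(i <- iota 0 (size w))
    defect_weight w (s e, [::]) i * Ecoef (take i w) (t e).
Proof.
rewrite /Ecoef (word_op_rcons w e (t e, [::])) (vequiv_vapply _ (Xdir_vacuum e)).
rewrite vapply_seq1 coef_vscale; congr (_ * _).
rewrite (rcons_commutes_word_op w (s e, [::])) coef_cat coef_flatten_vscale.
rewrite [X in X + _](_ : _ = 0) ?add0r // /coef /rcons_vec big_map big1 // => p _ /=.
by rewrite /rcons_basis xpair_eqE; case: (p.2.2) => [|h u]; rewrite andbF.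
Qed.

End AppendEdge.

Section Loop.
Hypothesis mu_gt0 : forall v, 0 < mu v.
Variables (eps : nat -> D) (k : nat).
Hypothesis eps_chain : forall j, (1 <= j < k.+3)%N -> t (eps j) = s (eps j.+1).
Hypothesis eps_close : t (eps k.+3) = s (eps 1%N).
Local Notation e := (eps k.+3).

Definition loop_term j := (if eps j == op e then 1 else 0)
  * Ecoef (subword eps j.+1 k.+2) (s e) * Ecoef (subword eps 1 j.-1) (t e).

Lemma Tr_loop : Tr (subword eps 1 k.+3) =
  mu (t e) * Num.sqrt (mu (s e) / mu (t e)) * \sum_(1 <= j < k.+3) loop_term j.
Proof.
rewrite Tr_subword // -eps_close subword1_rcons Ecoef_rcons size_subword1.
rewrite -create_annih_weight // -!mulrA big_add1 /index_iota subn0.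
congr (_ * (_ * _)); rewrite mulr_sumr.
apply: eq_big_seq => i; rewrite mem_iota add0n => /andP [_ ik].
rewrite /defect_weight /loop_term (nth_subword1 _ _ ik) (take_subword1 _ (ltnW ik)).
rewrite (drop_subword1 _ ik) succnK.
by case: ifP => _; rewrite /Ecoef ?mul1r ?mulrA ?mulr0 ?mul0r.
Qed.

Lemma loop_term_first : mu (t e) * Num.sqrt (mu (s e) / mu (t e)) * loop_term 1 =
  if eps 1%N == op e then Num.sqrt (mu (t e) / mu (s e)) * Tr (subword eps 2 k.+2)
  else 0.
Proof.
rewrite /loop_term (subword_nil _ (i := 1) (j := 0)) // Ecoef_nil mulr1.
case: ifP => e1; last by rewrite !mul0r mulr0.
rewrite (Tr_subword _ (i := 2) (j := k.+2)) // -(eps_chain (j := 1%N)) // (eqP e1) t_op.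
rewrite -(sqrtr_div_mulr (mu_gt0 (s e)) (mu_gt0 (t e))) mul1r.
by field; rewrite gt_eqF.
Qed.

Lemma loop_term_last : mu (t e) * Num.sqrt (mu (s e) / mu (t e)) * loop_term k.+2 =
  if eps k.+2 == op e then Num.sqrt (mu (s e) / mu (t e)) * Tr (subword eps 1 k.+1)
  else 0.
Proof.
rewrite /loop_term (subword_nil _ (i := k.+3) (j := k.+2)) // Ecoef_nil mulr1.
case: ifP => _; last by rewrite !mul0r mulr0.
by rewrite (Tr_subword _ (i := 1) (j := k.+1)) // -eps_close mul1r mulrCA mulrA.
Qed.

Lemma loop_sum_inner :
  mu (t e) * Num.sqrt (mu (s e) / mu (t e)) * \sum_(2 <= j < k.+2) loop_term j =
  (Num.sqrt (mu (s e) * mu (t e)))^-1 *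
    \sum_(2 <= j < k.+2 | eps j == op e)
      Tr (subword eps 1 j.-1) * Tr (subword eps j.+1 k.+2).
Proof.
rewrite !mulr_sumr [RHS]big_mkcond; apply: eq_big_nat => j /andP [j2 jk].
rewrite /loop_term; case: ifP => ej; last by rewrite !mul0r mulr0.
have j1 : (1 <= j.-1)%N by case: j j2 {jk ej} => [|[|j]].
rewrite (Tr_subword _ (i := 1) (j := j.-1)) // -eps_close.
rewrite (Tr_subword _ (i := j.+1) (j := k.+2)) //.
rewrite -(eps_chain (j := j)) ?(eqP ej) ?t_op; last by rewrite (ltnW j2) (ltn_trans jk).
rewrite -(sqrtr_div_divl (mu_gt0 (s e)) (mu_gt0 (t e))) mul1r.
by field; rewrite gt_eqF.
Qed.

End Loop.

End FockSpace.

Theorem lemma2p6 (R : realType) (V D : countType) (s t : D -> V) (op : D -> D)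
    (mu : V -> R)
    (hG : directed_graph s t op) (hlf : locally_finite s)
    (hconn : graph_connected s t) (hmu : forall v, 0 < mu v)
    (n : nat) (eps : nat -> D) (hn : (3 <= n)%N)
    (hloop : forall k, (1 <= k < n)%N -> t (eps k) = s (eps k.+1))
    (hclose : t (eps n) = s (eps 1%N)) :
  let Tr := Tr s t op mu in
  let a := s (eps n) in
  let b := t (eps n) in
  Tr (subword eps 1 n) =
    (Num.sqrt (mu a * mu b))^-1 *
      \sum_(2 <= j < n.-1 | eps j == op (eps n))
         Tr (subword eps 1 j.-1) * Tr (subword eps j.+1 n.-1)
  + (if eps n.-1 == op (eps n)
     then Num.sqrt (mu a / mu b) * Tr (subword eps 1 n.-2) else 0)
  + (if eps 1%N == op (eps n)
     then Num.sqrt (mu b / mu a) * Tr (subword eps 2 n.-1) else 0).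
Proof.
case: n hn hloop hclose => [|[|[|k]]] // _ eps_chain eps_close.
change k.+3.-1 with k.+2; change k.+2.-1 with k.+1.
rewrite /= (Tr_loop hG hmu eps_close) big_ltn // big_nat_recr //= !mulrDr.
rewrite (loop_term_first hG hmu eps_chain) (loop_term_last op mu eps_close).
rewrite (loop_sum_inner hG hmu eps_chain eps_close).
exact: addrC.
Qed.
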